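(* Let $p$ be a prime, $n$ a natural number, and let $A$ be either a pre-Lie ring or a left brace of cardinality $p^n$ which is both left nilpotent and right nilpotent. Then $A^{[(n+1)^{n+1}]}=0$.
   Context: A (left) brace is a set $A$ with binary operations $+,\circ$ such that $(A,+)$ is an abelian group, $(A,\circ)$ is a group, and $a\circ(b+c)+a=a\circ b+a\circ c$; write $a*b=a\circ b-a-b$. A pre-Lie ring is an abelian group $(A,+)$ with a biadditive product $\cdot$ satisfying $(x\cdot y)\cdot z-x\cdot(y\cdot z)=(y\cdot x)\cdot z-y\cdot(x\cdot z)$. Let $\star$ denote $*$ for braces and $\cdot$ for pre-Lie rings; for additive subgroups $X,Y$, $X\star Y$ is the additive subgroup generated by $\{x\star y\}$. Set $A^1=A^{(1)}=A^{[1]}=A$, $A^{i+1}=A\star A^i$, $A^{(i+1)}=A^{(i)}\star A$, $A^{[i+1]}=\sum_{j=1}^{i}A^{[j]}\star A^{[i+1-j]}$. $A$ is left nilpotent if $A^m=0$ for some $m$, right nilpotent if $A^{(m)}=0$ for some $m$. *)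

From HB Require Import structures.
From mathcomp Require Import all_boot all_order all_algebra.
Set Implicit Arguments. Unset Strict Implicit. Unset Printing Implicit Defensive.
Import GRing.Theory.
Local Open Scope ring_scope.

Section Defs.
Variable V : finZmodType.

Definition is_addsub (H : {set V}) : bool :=
  (0 \in H) && [forall x in H, forall y in H, (x - y) \in H].

Definition addspan (S : {set V}) : {set V} :=
  \bigcap_(H : {set V} | is_addsub H && (S \subset H)) H.

Variable op : V -> V -> V.

Definition starset (X Y : {set V}) : {set V} :=
  addspan [set op x y | x in X, y in Y].

(* A^i : A^1 = A, A^(i+1) = A star A^i *)
Definition leftpow (i : nat) : {set V} :=
  iter i.-1 (fun X => starset setT X) setT.

(* A^(i) : A^(1) = A, A^(i+1) = A^(i) star A *)
Definition rightpow (i : nat) : {set V} :=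
  iter i.-1 (fun X => starset X setT) setT.

(* given s = [:: A^[1]; ...; A^[i]] (i >= 1), compute A^[i+1]
   = sum_{j=1}^{i} A^[j] star A^[i+1-j] ; for s = [::] return A = A^[1] *)
Definition strong_next (s : seq {set V}) : {set V} :=
  if s is [::] then setT
  else addspan (\bigcup_(j < size s)
                  starset (nth setT s j) (nth setT s ((size s).-1 - j)%N)).

Fixpoint strong_list (k : nat) : seq {set V} :=
  if k is k'.+1 then rcons (strong_list k') (strong_next (strong_list k'))
  else [::].

(* A^[i] for i >= 1 *)
Definition strongpow (i : nat) : {set V} := nth setT (strong_list i) i.-1.

Definition left_nilpotent : Prop := exists m : nat, leftpow m = [set 0].
Definition right_nilpotent : Prop := exists m : nat, rightpow m = [set 0].
End Defs.

Definition is_preLie (V : finZmodType) (mul : V -> V -> V) : Prop :=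
  (forall x y z, mul (x + y) z = mul x z + mul y z) /\
  (forall x y z, mul x (y + z) = mul x y + mul x z) /\
  (forall x y z, mul (mul x y) z - mul x (mul y z)
                 = mul (mul y x) z - mul y (mul x z)).

Definition is_brace (V : finZmodType) (circ : V -> V -> V) : Prop :=
  (forall a b c, circ a (circ b c) = circ (circ a b) c) /\
  (exists e, (forall a, circ e a = a /\ circ a e = a) /\
             (forall a, exists b, circ a b = e /\ circ b a = e)) /\
  (forall a b c, circ a (b + c) + a = circ a b + circ a c).

Definition brace_star (V : finZmodType) (circ : V -> V -> V) (a b : V) : V :=
  circ a b - a - b.

(* For an additive group of order p^n, every strictly descending chain of
   subgroups reaches 0 within n steps, so A^(n+1) = 0 and A^{n+1} = 0.
   Both pre-Lie rings and braces have the property that left multiplication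
   preserves every right power A^(j).  Hence if A^[m] lies in A^(j+1), then
   by induction on s, A^[1 + s m] lies in A^(j+2) + A^{s+1}: a product x y
   with x in A^[a], a >= m, falls in A^(j+2), and otherwise y already lies in
   A^(j+2) + A^s, which left multiplication by x sends into A^(j+2) + A^{s+1}.
   Since A^{n+1} = 0, taking s = n gives A^[1 + n m] in A^(j+2); iterating
   m |-> 1 + n m from A^[1] = A yields A^[(n+1)^n] in A^(n+1) = 0. *)
From HB Require Import structures.
From mathcomp Require Import all_boot all_order all_algebra.
From mathcomp Require Import fingroup zify.
Set Implicit Arguments. Unset Strict Implicit.
Import GRing.Theory.
Local Open Scope ring_scope.

Section AdditiveSubgroups.
Variable V : finZmodType.
Implicit Types H K S X Y : {set V}.

Lemma addsub0 H : is_addsub H -> 0 \in H.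
Proof. by case/andP. Qed.

Lemma addsubB H x y : is_addsub H -> x \in H -> y \in H -> x - y \in H.
Proof. by case/andP=> _ /forall_inP/(_ x) Hx xH yH; apply: (forall_inP (Hx xH)). Qed.

Lemma addsubN H x : is_addsub H -> x \in H -> - x \in H.
Proof. by move=> hH xH; rewrite -sub0r addsubB // addsub0. Qed.

Lemma addsubD H x y : is_addsub H -> x \in H -> y \in H -> x + y \in H.
Proof. by move=> hH xH yH; rewrite -[y]opprK addsubB // addsubN. Qed.

Lemma is_addsubP H :
  0 \in H -> (forall x y, x \in H -> y \in H -> x - y \in H) -> is_addsub H.
Proof.
move=> H0 HB; rewrite /is_addsub H0 /=.
by apply/forall_inP=> x xH; apply/forall_inP=> y yH; apply: HB.
Qed.

Lemma addsubT : is_addsub [set: V].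
Proof. by apply: is_addsubP => *; rewrite inE. Qed.

Lemma addsub_eq0 H : is_addsub H -> H \subset [set 0] -> H = [set 0].
Proof. by move=> hH s; apply/eqP; rewrite eqEsubset s sub1set addsub0. Qed.

Lemma addspan_addsub S : is_addsub (addspan S).
Proof.
apply: is_addsubP; first by apply/bigcapP=> H /andP[hH _]; apply: addsub0.
move=> x y /bigcapP hx /bigcapP hy; apply/bigcapP=> H hH.
by case/andP: (hH) => hHs _; apply: addsubB => //; [apply: hx | apply: hy].
Qed.

Lemma addspan_sup S : S \subset addspan S.
Proof. by apply/subsetP=> x xS; apply/bigcapP=> H /andP[_ /subsetP]; apply. Qed.

Lemma addspan_min S H : is_addsub H -> S \subset H -> addspan S \subset H.
Proof. by move=> hH sSH; apply/subsetP=> x /bigcapP; apply; rewrite hH. Qed.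

Lemma mem_addspan_additive (f : V -> V) S H :
  (forall x y, f (x + y) = f x + f y) -> is_addsub H ->
  (forall s, s \in S -> f s \in H) -> forall y, y \in addspan S -> f y \in H.
Proof.
move=> fD hH hS y.
have f0 : f 0 = 0 by apply: (@addrI _ (f 0)); rewrite -fD !addr0.
have fB x z : f (x - z) = f x - f z.
  by rewrite -[in RHS](subrK z x) [in RHS]fD addrK.
have /subsetP/(_ y) : addspan S \subset [set y | f y \in H].
  apply: addspan_min; last by apply/subsetP=> s sS; rewrite inE hS.
  apply: is_addsubP; first by rewrite inE f0 addsub0.
  by move=> x z; rewrite !inE fB; apply: addsubB.
by rewrite inE; apply.
Qed.

Lemma addsub_group H : is_addsub H -> group_set H.
Proof.
move=> hH; apply/group_setP; split; first by rewrite FinRing.zmod1gE addsub0.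
by move=> x y xH yH; rewrite FinRing.zmodMgE addsubD.
Qed.

Lemma card_addsub_dvd H K :
  is_addsub H -> is_addsub K -> H \subset K -> (#|H| %| #|K|)%N.
Proof.
by move=> hH hK; apply: (@cardSg _ (Group (addsub_group hK)) (Group (addsub_group hH))).
Qed.

Lemma card_proper_addsub p n H K : prime p ->
  is_addsub H -> is_addsub K -> H \proper K -> (#|K| %| p ^ n)%N ->
  (#|H| * p <= #|K|)%N.
Proof.
move=> hp hH hK /andP[sHK nsKH] dvdK.
have [q eK] := dvdnP (card_addsub_dvd hH hK sHK).
have [e _ eq] : exists2 e, (e <= n)%N & q = (p ^ e)%N.
  by apply/dvdn_pfactor => //; apply: dvdn_trans dvdK; rewrite eK dvdn_mulr.
have e_gt0 : (0 < e)%N.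
  rewrite lt0n; apply: contraNneq nsKH => e0.
  suff /eqP-> : H == K by [].
  by rewrite eqEcard sHK eK eq e0 mul1n leqnn.
rewrite eK mulnC leq_mul2r eq; apply/orP; right.
by rewrite -[X in (X <= _)%N]expn1 leq_pexp2l // prime_gt0.
Qed.

Variable op : V -> V -> V.

Lemma starset_addsub X Y : is_addsub (starset op X Y).
Proof. exact: addspan_addsub. Qed.

Lemma mem_starset X Y x y : x \in X -> y \in Y -> op x y \in starset op X Y.
Proof. by move=> xX yY; apply: (subsetP (addspan_sup _)); apply: imset2_f. Qed.

Lemma starset_min X Y H : is_addsub H ->
  (forall x y, x \in X -> y \in Y -> op x y \in H) -> starset op X Y \subset H.
Proof.
move=> hH hXY; apply: addspan_min => //.
by apply/subsetP=> z /imset2P[x y xX yY ->]; apply: hXY.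
Qed.

Lemma starsetS X X' Y Y' : X \subset X' -> Y \subset Y' ->
  starset op X Y \subset starset op X' Y'.
Proof.
move=> sX sY; apply: starset_min; first exact: starset_addsub.
by move=> x y xX yY; apply: mem_starset; [apply: (subsetP sX) | apply: (subsetP sY)].
Qed.

End AdditiveSubgroups.

Section DescendingChain.
Variables (V : finZmodType) (p n : nat).
Hypotheses (hp : prime p) (hV : #|V| = (p ^ n)%N).
Variable F : {set V} -> {set V}.
Hypothesis FS : forall X Y : {set V}, X \subset Y -> F X \subset F Y.
Hypothesis F_addsub : forall X, is_addsub (F X).
Let X i := iter i F setT.

Lemma chain_addsub i : is_addsub (X i).
Proof. by case: i => [|i]; [apply: addsubT | apply: F_addsub]. Qed.

Lemma chain_subS i : X i.+1 \subset X i.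
Proof. by elim: i => [|i IH]; [apply: subsetT | apply: FS]. Qed.

Lemma chain_subn i j : (i <= j)%N -> X j \subset X i.
Proof.
move/subnK <-; elim: (j - i)%N => [|d IH] //=.
exact: subset_trans (chain_subS _) IH.
Qed.

Lemma chain_stationary i k : X i.+1 = X i -> X (i + k) = X i.
Proof.
move=> Xi; elim: k => [|k IH]; first by rewrite addn0.
by rewrite addnS /X iterS -/(X (i + k)) IH -/(X i) -iterS -/(X i.+1) Xi.
Qed.

Lemma chain_proper m i : X m = [set 0] -> X i.+1 != [set 0] ->
  X i.+1 \proper X i.
Proof.
move=> Xm nz; rewrite properEneq chain_subS andbT.
apply: contraNneq nz => Xi; apply/eqP/addsub_eq0; first exact: chain_addsub.
by rewrite Xi -(chain_stationary m Xi) -Xm chain_subn ?leq_addl.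
Qed.

Lemma card_chain m i : X m = [set 0] -> X i != [set 0] ->
  (#|X i| * p ^ i <= p ^ n)%N.
Proof.
move=> Xm; elim: i => [|i IH] nz; first by rewrite muln1 cardsT hV.
have nz' : X i != [set 0].
  apply: contraNneq nz => Xi; apply/eqP/addsub_eq0; first exact: chain_addsub.
  by rewrite -Xi chain_subS.
apply: leq_trans (IH nz'); rewrite expnS mulnA leq_mul2r.
rewrite (card_proper_addsub (n := n) hp) ?chain_addsub ?orbT ?(chain_proper Xm) //.
by rewrite -hV -cardsT card_addsub_dvd ?chain_addsub ?addsubT ?subsetT.
Qed.

Lemma chain_bound : (exists m, X m = [set 0]) -> X n = [set 0].
Proof.
move=> [m Xm]; apply/eqP; apply: contraT => nz.
have := card_chain Xm nz.
rewrite -{2}[(p ^ n)%N]mul1n leq_pmul2r ?expn_gt0 ?prime_gt0 // => card1.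
by move: nz; rewrite eq_sym eqEcard sub1set addsub0 ?chain_addsub // cards1 card1.
Qed.

End DescendingChain.

Section Powers.
Variables (V : finZmodType) (op : V -> V -> V).
Notation sp := (strongpow op).

Lemma leftpowSS i : leftpow op i.+2 = starset op setT (leftpow op i.+1).
Proof. by []. Qed.

Lemma rightpowSS i : rightpow op i.+2 = starset op (rightpow op i.+1) setT.
Proof. by []. Qed.

Lemma rightpow_le1 i : (i <= 1)%N -> rightpow op i = setT.
Proof. by case: i => [|[|]]. Qed.

Lemma rightpow_addsub i : is_addsub (rightpow op i).
Proof. by case: i => [|[|i]]; [apply: addsubT | apply: addsubT | apply: starset_addsub]. Qed.

Lemma rightpow_subS i : rightpow op i.+1 \subset rightpow op i.
Proof.
elim: i => [|[|i] IH]; try exact: subsetT.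
by rewrite rightpowSS (rightpowSS i) starsetS.
Qed.

Lemma size_strong_list k : size (strong_list op k) = k.
Proof. by elim: k => //= k IH; rewrite size_rcons IH. Qed.

Lemma nth_strong_list k i : (i < k)%N -> nth setT (strong_list op k) i = sp i.+1.
Proof.
elim: k => // k IH; rewrite ltnS leq_eqVlt => /orP[/eqP-> // | lt_ik].
by rewrite /= nth_rcons size_strong_list lt_ik IH.
Qed.

Lemma strongpowSS k :
  sp k.+2 = addspan (\bigcup_(j < k.+1) starset op (sp j.+1) (sp (k - j).+1)).
Proof.
have -> : sp k.+2 = nth setT (rcons (strong_list op k.+1)
                          (strong_next op (strong_list op k.+1))) k.+1 by [].
rewrite nth_rcons size_strong_list ltnn eqxx /strong_next.
case E: (strong_list op k.+1) (size_strong_list k.+1) => [//|x s] _.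
rewrite -E size_strong_list; congr addspan; apply: eq_bigr => j _.
by rewrite !nth_strong_list // ltnS leq_subr.
Qed.

Lemma strongpow_addsub k : is_addsub (sp k).
Proof.
by case: k => [|[|k]]; [apply: addsubT | apply: addsubT | rewrite strongpowSS addspan_addsub].
Qed.

Lemma mem_strongpow_op a b x y : (0 < a)%N -> (0 < b)%N ->
  x \in sp a -> y \in sp b -> op x y \in sp (a + b).
Proof.
case: a b => [|a] [|b] // _ _ xa yb; rewrite addSn addnS strongpowSS.
have lt_a : (a < (a + b).+1)%N by rewrite ltnS leq_addr.
apply: (subsetP (addspan_sup _)); apply/bigcupP; exists (Ordinal lt_a) => //=.
by rewrite addKn mem_starset.
Qed.

Lemma strongpowSS_min k H : is_addsub H ->
  (forall a b x y, (0 < a)%N -> (0 < b)%N -> (a + b = k.+2)%N ->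
     x \in sp a -> y \in sp b -> op x y \in H) -> sp k.+2 \subset H.
Proof.
move=> hH hab; rewrite strongpowSS; apply: addspan_min => //.
apply/bigcupsP=> j _; apply: starset_min => // x y xj yj.
by apply: (hab j.+1 (k - j).+1) => //; have := ltn_ord j; lia.
Qed.

Lemma strongpow_subS k : sp k.+1 \subset sp k.
Proof.
elim/ltn_ind: k => -[|[|k]] IH; rewrite ?subsetT //.
apply: strongpowSS_min; first exact: strongpow_addsub.
move=> [//|[|a]] b x y _ b_gt0 ab xa yb.
  have {}yb : y \in sp k.+2 by rewrite (_ : k.+2 = b) //; lia.
  by rewrite -[k.+2]/(1 + k.+1)%N mem_strongpow_op // (subsetP (IH k.+1 _)).
have -> : k.+2 = (a.+1 + b)%N by lia.
by rewrite mem_strongpow_op // (subsetP (IH a.+1 _)) //; lia.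
Qed.

Lemma strongpow_subn a b : (a <= b)%N -> sp b \subset sp a.
Proof.
move/subnK <-; elim: (b - a)%N => [|d IH] //=.
exact: subset_trans (strongpow_subS _) IH.
Qed.

End Powers.

Section NilpotencyIndex.
Variables (V : finZmodType) (op : V -> V -> V) (p n : nat).
Hypotheses (hp : prime p) (hV : #|V| = (p ^ n)%N).

Lemma leftpow_card_eq0 : left_nilpotent op -> leftpow op n.+1 = [set 0].
Proof.
move=> [m Lm]; apply: (chain_bound hp hV (F := starset op setT)).
- by move=> X Y; apply: starsetS.
- exact: starset_addsub.
- by exists m.-1.
Qed.

Lemma rightpow_card_eq0 : right_nilpotent op -> rightpow op n.+1 = [set 0].
Proof.
move=> [m Rm]; apply: (chain_bound hp hV (F := starset op ^~ setT)).
- by move=> X Y sXY; apply: starsetS.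
- by move=> X; apply: starset_addsub.
- by exists m.-1.
Qed.

End NilpotencyIndex.

Definition rightpow_left_invariant (V : finZmodType) (op : V -> V -> V) : Prop :=
  forall i a y, y \in rightpow op i -> op a y \in rightpow op i.

Fixpoint strong_depth (l j : nat) : nat :=
  if j is j'.+1 then (1 + l * strong_depth l j')%N else 1%N.

Lemma strong_depth_gt0 l j : (0 < strong_depth l j)%N.
Proof. by case: j. Qed.

Lemma strong_depth_le l j : (strong_depth l j <= l.+1 ^ j)%N.
Proof.
elim: j => [|j IH] //=; have := expn_gt0 l.+1 j; rewrite expnS; nia.
Qed.

Section Depth.
Variables (V : finZmodType) (op : V -> V -> V).
Hypothesis opD : forall a x y, op a (x + y) = op a x + op a y.
Hypothesis op_rightpow : rightpow_left_invariant op.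
Variable l : nat.
Hypothesis leftpow_l : leftpow op l.+1 = [set 0].
Notation sp := (strongpow op).

Lemma strongpow_sub_rightpow_leftpow j m s k : (0 < m)%N ->
  sp m \subset rightpow op j.+1 -> (1 + s * m <= k)%N ->
  sp k \subset addspan (rightpow op j.+2 :|: leftpow op s.+1).
Proof.
move=> m_gt0 sp_m; elim: s k => [|s IH] k hk.
  exact: subset_trans (subsetT _) (subset_trans (subsetUr _ _) (addspan_sup _)).
have [k' ek] : exists k', k = k'.+2 by exists k.-2; move: hk; rewrite mulSn; lia.
rewrite ek; apply: strongpowSS_min; first exact: addspan_addsub.
move=> a b x y a_gt0 b_gt0 ab xa yb.
have [le_ma | lt_am] := leqP m a.
  apply: (subsetP (addspan_sup _)); rewrite inE rightpowSS mem_starset //.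
  exact: (subsetP sp_m) (subsetP (strongpow_subn _ le_ma) _ xa).
have yW : y \in addspan (rightpow op j.+2 :|: leftpow op s.+1).
  by apply: (subsetP (IH b _)) => //; move: hk; rewrite ek mulSn; lia.
apply: (mem_addspan_additive (opD x) (addspan_addsub _) _ yW) => t.
rewrite inE => /orP[t_r | t_l]; apply: (subsetP (addspan_sup _)); rewrite inE.
  by rewrite op_rightpow.
by apply/orP; right; rewrite leftpowSS mem_starset ?in_setT.
Qed.

Lemma strongpow_next_rightpow j m : (0 < m)%N ->
  sp m \subset rightpow op j.+1 -> sp (1 + l * m) \subset rightpow op j.+2.
Proof.
move=> m_gt0 sp_m.
apply: subset_trans (strongpow_sub_rightpow_leftpow m_gt0 sp_m (leqnn _)) _.
apply: addspan_min; first exact: rightpow_addsub.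
by rewrite leftpow_l subUset subxx sub1set addsub0 ?rightpow_addsub.
Qed.

Lemma strongpow_depth_sub j : sp (strong_depth l j) \subset rightpow op j.+1.
Proof.
elim: j => [|j IH]; first exact: subsetT.
exact: strongpow_next_rightpow (strong_depth_gt0 l j) IH.
Qed.

End Depth.

Lemma strongpow_pgroup_eq0 (V : finZmodType) (op : V -> V -> V) p n :
  (forall a x y, op a (x + y) = op a x + op a y) -> rightpow_left_invariant op ->
  prime p -> #|V| = (p ^ n)%N -> left_nilpotent op -> right_nilpotent op ->
  strongpow op ((n.+1) ^ (n.+1))%N = [set 0].
Proof.
move=> opD op_rightpow hp hV /(leftpow_card_eq0 hp hV) L /(rightpow_card_eq0 hp hV) R.
apply: addsub_eq0; first exact: strongpow_addsub.
rewrite -R; apply: subset_trans (strongpow_depth_sub opD op_rightpow L n).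
by apply: strongpow_subn; apply: leq_trans (strong_depth_le _ _) _; rewrite expnS leq_pmull.
Qed.

Lemma preLie_rightpow_left_invariant (V : finZmodType) (mul : V -> V -> V) :
  is_preLie mul -> rightpow_left_invariant mul.
Proof.
move=> [_ [mulD preLie]]; elim=> [|[|i] IH] a y; try by rewrite rightpow_le1 ?inE.
rewrite rightpowSS => yR.
apply: (mem_addspan_additive (mulD a) (starset_addsub _ _ _) _ yR).
move=> _ /imset2P[x c xR _ ->].
have -> : mul a (mul x c) = mul (mul a x) c - (mul (mul x a) c - mul x (mul a c)).
  by rewrite -preLie opprB addrC subrK.
have xaR : mul x a \in rightpow mul i.+1.
  by apply: (subsetP (rightpow_subS _ i.+1)); rewrite rightpowSS mem_starset ?inE.
have S_addsub := @starset_addsub _ mul (rightpow mul i.+1) setT.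
apply: addsubB => //; first exact: mem_starset (IH a x xR) (in_setT c).
by apply: addsubB => //; apply: mem_starset.
Qed.

Section Brace.
Variables (V : finZmodType) (circ : V -> V -> V).
Hypothesis brace_circ : is_brace circ.
Let star := brace_star circ.
Let lambda a y := circ a y - a.

Let circA a b c : circ a (circ b c) = circ (circ a b) c.
Proof. by case: brace_circ. Qed.

Let circDr a b c : circ a (b + c) + a = circ a b + circ a c.
Proof. by case: brace_circ => _ []. Qed.

Lemma brace_circ0r a : circ a 0 = a.
Proof. by apply: (@addrI _ (circ a 0)); rewrite -circDr addr0. Qed.

Lemma brace_circ_inv a : exists b, circ a b = 0 /\ circ b a = 0.
Proof.
case: brace_circ => _ [[e [e_id e_inv]] _].
have e0 : e = 0 by rewrite -(brace_circ0r e); case: (e_id 0).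
by rewrite -e0.
Qed.

Lemma brace_lambdaD a x y : lambda a (x + y) = lambda a x + lambda a y.
Proof.
rewrite /lambda.
transitivity ((circ a (x + y) + a) - (a + a)); first by rewrite opprD addrA addrK.
by rewrite circDr opprD addrACA.
Qed.

Lemma brace_lambdaB a x y : lambda a (x - y) = lambda a x - lambda a y.
Proof. by rewrite -[in RHS](subrK y x) [in RHS]brace_lambdaD addrK. Qed.

Lemma brace_starE a y : star a y = lambda a y - y.
Proof. by []. Qed.

Lemma brace_starDr a x y : star a (x + y) = star a x + star a y.
Proof. by rewrite !brace_starE brace_lambdaD opprD addrACA. Qed.

Lemma brace_lambda_circ u v c : lambda (circ u v) c = lambda u (lambda v c).
Proof.
have circBr y z : circ u (y - z) = circ u y - circ u z + u.
  by have := circDr u (y - z) z; rewrite subrK addrAC => ->; rewrite addrK.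
by rewrite /lambda -circA circBr addrK.
Qed.

(* The conjugate a o x o a^-1 equals lambda_a(x) + lambda_a(x * a^-1), and
   lambda_a(x * c) = (a o x o a^-1) * lambda_a(c). *)
Lemma brace_lambda_rightpow i a y :
  y \in rightpow star i -> lambda a y \in rightpow star i.
Proof.
elim: i a y => [|[|i] IH] a y; try by rewrite rightpow_le1 ?inE.
rewrite rightpowSS => yR.
apply: (mem_addspan_additive (brace_lambdaD a) (starset_addsub _ _ _) _ yR).
move=> _ /imset2P[x c xR _ ->].
have [a' [aa' a'a]] := brace_circ_inv a.
pose x' := circ (circ a x) a'.
have x'a : circ x' a = circ a x by rewrite /x' -circA a'a brace_circ0r.
have x'E : x' = lambda a x + lambda a (star x a').
  have circE : circ x a' = x + a' + star x a'.
    by rewrite /star /brace_star [RHS]addrC -[_ - x - a']addrA -opprD subrK.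
  rewrite /x' -circA -[LHS](subrK a) -/(lambda a _) circE !brace_lambdaD.
  by rewrite {2}/lambda aa' sub0r addrAC subrK.
have x'R : x' \in rightpow star i.+1.
  rewrite x'E addsubD ?rightpow_addsub ?IH //.
  by apply: (subsetP (rightpow_subS _ i.+1)); rewrite rightpowSS mem_starset ?inE.
have -> : lambda a (star x c) = star x' (lambda a c).
  by rewrite !brace_starE brace_lambdaB -brace_lambda_circ -x'a brace_lambda_circ.
by apply: mem_starset; rewrite ?inE.
Qed.

Lemma brace_rightpow_left_invariant : rightpow_left_invariant star.
Proof.
move=> i a y yR; rewrite brace_starE addsubB ?rightpow_addsub //.
exact: brace_lambda_rightpow.
Qed.

End Brace.

Unset Implicit Arguments. Set Strict Implicit.

Theorem corollary19 (p n : nat) (hp : prime p) :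
  (forall (V : finZmodType) (mul : V -> V -> V),
      is_preLie mul -> #|V| = (p ^ n)%N ->
      left_nilpotent mul -> right_nilpotent mul ->
      strongpow mul ((n.+1) ^ (n.+1))%N = [set 0 : V])
  /\
  (forall (V : finZmodType) (circ : V -> V -> V),
      is_brace circ -> #|V| = (p ^ n)%N ->
      left_nilpotent (brace_star circ) -> right_nilpotent (brace_star circ) ->
      strongpow (brace_star circ) ((n.+1) ^ (n.+1))%N = [set 0 : V]).
Proof.
split=> V op op_struct.
  apply: strongpow_pgroup_eq0 => //; last exact: preLie_rightpow_left_invariant.
  by case: op_struct => _ [].
apply: strongpow_pgroup_eq0 => //; last exact: brace_rightpow_left_invariant.
exact: brace_starDr.
Qed.
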